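(* Let $s\geq 1$ and $n\geq 2s$ be integers, and let $G^*=K_1\vee(K_{n-2}\cup K_1)$. (i) If $n\geq 2s+2$, then $\lambda_1(D(G^* ))\le \lambda_1(D(K_s\vee(K_{n-2s}\cup sK_1)))$, with equality if and only if $s=1$. (ii) If $n=2s+1$, then $\lambda_1(D(G^* ))\le \lambda_1(D(S_{n,\frac{n-1}{2}}))$, with equality if and only if $n=3$. (iii) If $n=2s$ and $n\geq 10$, then $\lambda_1(D(G^* ))<\lambda_1(D(S_{n,\frac{n}{2}}))$. (iv) If $n=2s$ and $2\le n\le 8$, then $\lambda_1(D(S_{n,\frac{n}{2}}))\le \lambda_1(D(G^* ))$, with equality if and only if $n=2$.
   Context: All graphs are finite, simple, undirected. For a connected graph $G$, $D(G)$ is its distance matrix (entry $(i,j)$ is the distance between $v_i$ and $v_j$) and $\lambda_1(D(G))$ its largest eigenvalue. $G\cup H$ is disjoint union, $G\vee H$ the join (disjoint union plus all edges between the two vertex sets), $tK_1$ the edgeless graph on $t$ vertices, $K_0$ the empty graph, and $S_{n,k}=K_k\vee(n-k)K_1$. *)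

From HB Require Import structures.
From mathcomp Require Import all_boot all_order all_algebra.
From mathcomp Require Import reals classical_sets.
Set Implicit Arguments. Unset Strict Implicit. Unset Printing Implicit Defensive.
Import Order.TTheory GRing.Theory Num.Theory.

(* A simple graph on vertex set 'I_N is a symmetric irreflexive relation. *)
Definition graph (N : nat) := rel 'I_N.

Definition complete (k : nat) : graph k := fun i j => i != j.
Definition edgeless (k : nat) : graph k := fun _ _ => false.
Arguments complete k : clear implicits.
Arguments edgeless k : clear implicits.

Definition gunion m k (g : graph m) (h : graph k) : graph (m + k) :=
  fun i j => match split i, split j with
             | inl a, inl b => g a b
             | inr a, inr b => h a b
             | _, _ => false
             end.

Definition gjoin m k (g : graph m) (h : graph k) : graph (m + k) :=
  fun i j => match split i, split j with
             | inl a, inl b => g a b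
             | inr a, inr b => h a b
             | _, _ => true
             end.

Fixpoint reach N (g : graph N) (d : nat) (i j : 'I_N) : bool :=
  match d with
  | 0 => i == j
  | d'.+1 => reach g d' i j || [exists m, reach g d' i m && g m j]
  end.

(* Graph distance: least d with a walk of length d (for a connected graph on
   N vertices this is < N; unreachable pairs would get N). *)
Definition gdist N (g : graph N) (i j : 'I_N) : nat :=
  find (fun d => reach g d i j) (iota 0 N).

Local Open Scope ring_scope.

Definition distmx (R : pzRingType) N (g : graph N) : 'M[R]_N :=
  \matrix_(i, j) (gdist g i j)%:R.

Definition lambda1 (R : realType) N (A : 'M[R]_N) : R :=
  sup [set a : R | eigenvalue A a].

Definition Gstar (n : nat) := gjoin (complete 1) (gunion (complete (n - 2)) (complete 1)).
Definition Hsn (s n : nat) := gjoin (complete s) (gunion (complete (n - 2 * s)) (edgeless s)).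
Definition Snk (n k : nat) := gjoin (complete k) (edgeless (n - k)).
Arguments Gstar n : clear implicits.
Arguments Hsn s n : clear implicits.
Arguments Snk n k : clear implicits.

From HB Require Import structures.
From mathcomp Require Import all_boot all_order all_algebra.
From mathcomp Require Import reals classical_sets boolp.
From mathcomp Require Import ring lra zify.
Import Order.TTheory GRing.Theory Num.Theory.
Set Implicit Arguments. Unset Strict Implicit. Unset Printing Implicit Defensive.
Local Open Scope ring_scope.

(* All graphs compared are K_a ∨ (K_b ∪ eK_1) with a > 0 (b = 0 for S_{n,k}).  A vertex
   of K_a is adjacent to every other vertex, so distances are 1 on edges and 2 otherwise,
   and the distance matrix is constant on the three blocks K_a, K_b, eK_1.  A positive
   vector y with yD <= r y bounds every eigenvalue by r, and any eigenvector gives a lower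
   bound for lambda_1; taking block-constant vectors reduces both to the 3x3 quotient
   matrix, whose eigenvalues are roots of an explicit cubic (a quadratic for S_{n,k}).
   Each comparison then amounts to the signs of two such polynomials at explicit points:
   one is nonnegative at r, so its graph has lambda_1 <= r, while the other is negative
   at r and has a root beyond r. *)

Section SpectralBounds.
Variable R : realType.
Implicit Types (N : nat) (r x : R).

(* Compare an eigenvector [v] with [y] at an index maximizing [|v_i| / y_i]. *)
Lemma eigenvalue_le_of_subeigenvector N (A : 'M[R]_N) (y : 'rV[R]_N) r x :
  (forall i j, 0 <= A i j) -> (forall i, 0 < y 0 i) ->
  (forall j, (y *m A) 0 j <= r * y 0 j) -> eigenvalue A x -> x <= r.
Proof.
move=> A_ge0 y_gt0 yA /eigenvalueP [v vA v_neq0].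
have [i0 vi0] : exists i, v 0 i != 0.
  apply/existsP; apply: contraNT v_neq0 => /existsPn v0; apply/eqP/rowP => i.
  by rewrite mxE; apply/eqP/negPn/v0.
pose t i := `|v 0 i| / y 0 i.
have [j _ tj] := @arg_maxP _ _ 'I_N i0 xpredT t isT.
have t_gt0 : 0 < t j.
  by apply: lt_le_trans (tj i0 isT); rewrite /t divr_gt0 ?normr_gt0.
have vj : `|v 0 j| = t j * y 0 j by rewrite /t divfK // gt_eqF.
have vj_gt0 : 0 < `|v 0 j| by rewrite vj mulr_gt0.
suff : `|x| * `|v 0 j| <= r * `|v 0 j|.
  by rewrite ler_pM2r // => /(le_trans (ler_norm x)).
have -> : `|x| * `|v 0 j| = `|(v *m A) 0 j| by rewrite vA mxE normrM.
rewrite mxE; apply: le_trans (ler_norm_sum _ _ _) _.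
apply: (@le_trans _ _ (\sum_i t j * (y 0 i * A i j))).
  apply: ler_sum => i _; rewrite normrM (ger0_norm (A_ge0 _ _)) mulrA ler_wpM2r //.
  by rewrite -ler_pdivrMr //; apply: tj.
rewrite -mulr_sumr vj mulrCA ler_wpM2l ?(ltW t_gt0) //.
by have := yA j; rewrite mxE.
Qed.

Lemma eigenvalue_bounded N (A : 'M[R]_N) : (forall i j, 0 <= A i j) ->
  exists r, forall x, eigenvalue A x -> x <= r.
Proof.
move=> A_ge0; exists (\sum_i \sum_j A i j) => x.
apply: (@eigenvalue_le_of_subeigenvector _ A (\row_i 1)) => // [i|j].
  by rewrite mxE ltr01.
rewrite [X in _ <= _ * X]mxE mulr1 mxE; apply: ler_sum => i _; rewrite mxE mul1r.
by rewrite (bigD1 j) //= lerDl sumr_ge0.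
Qed.

(* [lambda1] is a supremum, and [sup set0 = 0]: hence the condition [0 <= r]. *)
Lemma lambda1_le_of_subeigenvector N (A : 'M[R]_N) (y : 'rV[R]_N) r :
  (forall i j, 0 <= A i j) -> (forall i, 0 < y 0 i) ->
  (forall j, (y *m A) 0 j <= r * y 0 j) -> 0 <= r -> lambda1 A <= r.
Proof.
move=> A_ge0 y_gt0 yA r_ge0; rewrite /lambda1.
have [[x Ax]|noeig] := pselect (exists x, eigenvalue A x); last first.
  suff -> : [set a : R | eigenvalue A a]%classic = set0 by rewrite sup0.
  by apply/seteqP; split => a //= Aa; apply: noeig; exists a.
apply: ge_sup; first by exists x.
by move=> a; apply: eigenvalue_le_of_subeigenvector yA.
Qed.

Lemma eigenvalue_le_lambda1 N (A : 'M[R]_N) x :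
  (forall i j, 0 <= A i j) -> eigenvalue A x -> x <= lambda1 A.
Proof.
move=> /eigenvalue_bounded [r Ar] Ax; apply: ub_le_sup => //.
by exists r => a /Ar.
Qed.

End SpectralBounds.

Lemma reach_ext N (g1 g2 : graph N) : g1 =2 g2 -> forall d, reach g1 d =2 reach g2 d.
Proof.
move=> g12; elim=> [|d IH] i j //=; rewrite IH; congr (_ || _).
by apply: eq_existsb => m; rewrite IH g12.
Qed.

Lemma distmx_ext (R : pzRingType) N (g1 g2 : graph N) :
  g1 =2 g2 -> distmx R g1 = distmx R g2.
Proof.
move=> g12; apply/matrixP => i j; rewrite !mxE /gdist; congr (_%:R).
by apply: eq_find => d; apply: reach_ext.
Qed.

Lemma find_iota0 (a : pred nat) N k : (k < N)%N -> a k ->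
  (forall k', (k' < k)%N -> ~~ a k') -> find a (iota 0 N) = k.
Proof.
move=> kN ak before_k.
rewrite -(subnKC kN) iotaD find_cat.
have -> : has a (iota 0 k.+1).
  by apply/hasP; exists k; rewrite // mem_iota leq0n ltnSn.
rewrite -addn1 iotaD find_cat add0n.
have -> : has a (iota 0 k) = false.
  by apply/negbTE/hasPn => l; rewrite mem_iota => /andP[_ /before_k].
by rewrite size_iota /= ak addn0.
Qed.

Lemma reach1 N (g : graph N) i j : reach g 1 i j = (i == j) || g i j.
Proof.
rewrite /=; congr (_ || _); apply/existsP/idP => [[m /andP[/eqP -> ->]] //|gij].
by exists i; rewrite eqxx.
Qed.

Lemma gdist_refl N (g : graph N) i : gdist g i i = 0%N.
Proof. by apply: find_iota0; rewrite /= ?eqxx //; apply: leq_ltn_trans (ltn_ord i). Qed.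

Lemma gdist_edge N (g : graph N) i j : i != j -> g i j -> gdist g i j = 1%N.
Proof.
move=> ij gij; apply: find_iota0.
- by move: ij (ltn_ord i) (ltn_ord j); rewrite -val_eqE /=; lia.
- by rewrite reach1 gij orbT.
- by move=> k; rewrite ltnS leqn0 => /eqP ->.
Qed.

Lemma gdist_common_neighbour N (g : graph N) i j m :
  i != j -> ~~ g i j -> g i m -> g m j -> gdist g i j = 2%N.
Proof.
move=> ij gij gim gmj.
have im : i != m by apply: contraNneq gij => ->.
have mj : m != j by apply: contraNneq gij => <-.
apply: find_iota0.
- by move: ij im mj (ltn_ord i) (ltn_ord j) (ltn_ord m); rewrite -!val_eqE /=; lia.
- have r1 : reach g 1 i m by rewrite reach1 gim orbT.
  by apply/orP; right; apply/existsP; exists m; apply/andP.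
- move=> k; rewrite ltnS leq_eqVlt ltnS leqn0 => /orP[]/eqP->.
    by rewrite reach1 negb_or ij gij.
  by [].
Qed.

Lemma distmx_dominating (R : pzRingType) N (g : graph N) (u : 'I_N) :
  (forall i, i != u -> g i u && g u i) ->
  distmx R g = \matrix_(i, j) if i == j then 0 else if g i j then 1 else 2.
Proof.
move=> gu; apply/matrixP => i j; rewrite !mxE.
have [->|ij] := eqVneq i j; first by rewrite gdist_refl.
have [gij|gij] := boolP (g i j); first by rewrite (gdist_edge ij).
have iu : i != u.
  by apply: contraNneq gij => eiu; move: ij; rewrite eiu eq_sym => /gu/andP[_ ->].
have ju : j != u.
  by apply: contraNneq gij => eju; move: ij; rewrite eju => /gu/andP[-> _].
have /andP[giu _] := gu i iu; have /andP[_ guj] := gu j ju.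
by rewrite (gdist_common_neighbour ij gij giu guj).
Qed.

Definition Kjoin a b e : graph (a + (b + e)) :=
  gjoin (complete a) (gunion (complete b) (edgeless e)).
Arguments Kjoin a b e : clear implicits.

(* Blocks 0, 1 and 2 are K_a, K_b and eK_1. *)
Definition block a b e (i : 'I_(a + (b + e))) : nat :=
  if split i is inr k then (if split k is inl _ then 1 else 2) else 0.

Definition block_adj (p q : nat) : bool := [|| p == 0, q == 0 | (p == 1) && (q == 1)]%N.

Definition block_dist (R : pzRingType) (p q : nat) : R := if block_adj p q then 1 else 2.

Definition distKjoin (R : pzRingType) a b e : 'M[R]_(a + (b + e)) :=
  \matrix_(i, j) if i == j then 0 else block_dist R (block i) (block j).

Lemma Kjoin_adj a b e i j : Kjoin a b e i j = (i != j) && block_adj (block i) (block j).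
Proof.
rewrite /Kjoin /gjoin /gunion /block /complete /edgeless.
case: split_ordP => [x ->|x ->]; case: split_ordP => [y ->|y ->];
  rewrite ?eq_lshift ?eq_rshift ?eq_lrshift ?eq_rlshift /block_adj /= ?orbT ?andbT //.
case: (split_ordP x) => [z ->|z ->]; case: (split_ordP y) => [u ->|u ->];
  by rewrite ?eq_lshift ?eq_rshift ?eq_lrshift ?eq_rlshift ?andbT ?andbF.
Qed.

Section Blocks.
Variables a b e : nat.
Implicit Type i : 'I_(a + (b + e)).

Lemma block_lshift (x : 'I_a) : block (lshift (b + e) x) = 0%N.
Proof. by rewrite /block (unsplitK (inl x)). Qed.

Lemma block_mshift (x : 'I_b) : block (rshift a (lshift e x) : 'I_(a + (b + e))) = 1%N.
Proof. by rewrite /block (unsplitK (inr _)) (unsplitK (inl x)). Qed.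

Lemma block_rshift (x : 'I_e) : block (rshift a (rshift b x) : 'I_(a + (b + e))) = 2%N.
Proof. by rewrite /block (unsplitK (inr _)) (unsplitK (inr x)). Qed.

Lemma blockP i : [\/ block i = 0%N, block i = 1%N | block i = 2%N].
Proof. by rewrite /block; case: (split i) => [x|x]; [|case: (split x)]; constructor. Qed.

Lemma sum_block (V : nmodType) (F : nat -> V) :
  \sum_(i < a + (b + e)) F (block i) = F 0%N *+ a + F 1%N *+ b + F 2%N *+ e.
Proof.
rewrite big_split_ord /= big_split_ord /= -addrA.
under eq_bigr do rewrite block_lshift.
under [X in _ + (X + _)]eq_bigr do rewrite block_mshift.
under [X in _ + (_ + X)]eq_bigr do rewrite block_rshift.
by rewrite !sumr_const !card_ord.
Qed.

Lemma distmx_Kjoin (R : pzRingType) : (0 < a)%N ->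
  distmx R (Kjoin a b e) = distKjoin R a b e.
Proof.
move=> a_gt0; rewrite (@distmx_dominating _ _ _ (lshift (b + e) (Ordinal a_gt0))).
  apply/matrixP => i j; rewrite !mxE Kjoin_adj /block_dist.
  by case: eqVneq.
by move=> i iu; rewrite !Kjoin_adj block_lshift iu eq_sym iu /block_adj orbT.
Qed.

End Blocks.

Definition blockw (R : Type) (w0 w1 w2 : R) (p : nat) : R :=
  if p == 0%N then w0 else if p == 1%N then w1 else w2.

Section KjoinSpectrum.
Variable R : realType.
Variables a b e : nat.
Hypothesis a_gt0 : (0 < a)%N.

Lemma distKjoin_ge0 i j : 0 <= distKjoin R a b e i j.
Proof. by rewrite mxE /block_dist; case: eqP; case: block_adj; rewrite ?ler01 ?ler0n. Qed.

(* The three right-hand sides are the rows of the quotient matrix of the blocks. *)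
Lemma blockw_mulmx_distKjoin (w0 w1 w2 : R) j :
  ((\row_i blockw w0 w1 w2 (block i)) *m distKjoin R a b e) 0 j =
  blockw (a%:R * w0 + b%:R * w1 + e%:R * w2 - w0)
         (a%:R * w0 + b%:R * w1 + 2 * e%:R * w2 - w1)
         (a%:R * w0 + 2 * b%:R * w1 + 2 * e%:R * w2 - 2 * w2) (block j).
Proof.
pose F p := blockw w0 w1 w2 p * block_dist R p (block j).
have -> : ((\row_i blockw w0 w1 w2 (block i)) *m distKjoin R a b e) 0 j =
          \sum_(i < a + (b + e)) F (block i) - F (block j).
  rewrite !mxE (bigD1 j) //= [X in _ = X - _](bigD1 j) //= !mxE eqxx mulr0 add0r.
  rewrite addrAC /F subrr add0r; apply: eq_bigr => i ij.
  by rewrite !mxE (negbTE ij).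
rewrite sum_block /F /blockw /block_dist /block_adj.
by case: (blockP j) => ->/=; rewrite ?mulr1 ?mulr_natl //; ring.
Qed.

Lemma Kjoin_lambda1_le (r w0 w1 w2 : R) : 0 < w0 -> 0 < w1 -> 0 < w2 -> 0 <= r ->
  a%:R * w0 + b%:R * w1 + e%:R * w2 - w0 <= r * w0 ->
  a%:R * w0 + b%:R * w1 + 2 * e%:R * w2 - w1 <= r * w1 ->
  a%:R * w0 + 2 * b%:R * w1 + 2 * e%:R * w2 - 2 * w2 <= r * w2 ->
  lambda1 (distmx R (Kjoin a b e)) <= r.
Proof.
move=> w0_gt0 w1_gt0 w2_gt0 r_ge0 h0 h1 h2; rewrite distmx_Kjoin //.
apply: (@lambda1_le_of_subeigenvector _ _ _ (\row_i blockw w0 w1 w2 (block i))) => //.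
- exact: distKjoin_ge0.
- by move=> i; rewrite mxE /blockw; case: (blockP i) => ->.
- move=> j; rewrite blockw_mulmx_distKjoin [X in _ <= _ * X]mxE /blockw.
  by case: (blockP j) => ->.
Qed.

Lemma Kjoin_eigenvalue_le_lambda1 (x w0 w1 w2 : R) :
  a%:R * w0 + b%:R * w1 + e%:R * w2 - w0 = x * w0 ->
  a%:R * w0 + b%:R * w1 + 2 * e%:R * w2 - w1 = x * w1 ->
  a%:R * w0 + 2 * b%:R * w1 + 2 * e%:R * w2 - 2 * w2 = x * w2 ->
  [\/ w0 != 0, (0 < b)%N /\ w1 != 0 | (0 < e)%N /\ w2 != 0] ->
  x <= lambda1 (distmx R (Kjoin a b e)).
Proof.
move=> h0 h1 h2 w_neq0; rewrite distmx_Kjoin //.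
apply: eigenvalue_le_lambda1; first exact: distKjoin_ge0.
apply/eigenvalueP; exists (\row_i blockw w0 w1 w2 (block i)).
  apply/rowP => j; rewrite blockw_mulmx_distKjoin [RHS]mxE mxE /blockw.
  by case: (blockP j) => ->.
have [i wi] : exists i : 'I_(a + (b + e)), blockw w0 w1 w2 (block i) != 0.
  case: w_neq0 => [w0_neq0|[b_gt0 w1_neq0]|[e_gt0 w2_neq0]].
  - by exists (lshift (b + e) (Ordinal a_gt0)); rewrite block_lshift.
  - by exists (rshift a (lshift e (Ordinal b_gt0))); rewrite block_mshift.
  - by exists (rshift a (rshift b (Ordinal e_gt0))); rewrite block_rshift.
by apply: contraNneq wi => /rowP/(_ i); rewrite !mxE => ->.
Qed.

End KjoinSpectrum.

Section Families.
Variable R : realType.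
Local Notation L g := (lambda1 (distmx R g)).

Lemma root_gt_of_sign_change (p : {poly R}) r U :
  r <= U -> p.[r] < 0 -> 0 <= p.[U] -> exists2 x, r < x & root p x.
Proof.
move=> rU pr pU.
have prU : p.[r] <= 0 <= p.[U] by rewrite (ltW pr).
have [x /andP[rx _] px] := poly_ivt rU prU.
exists x => //; rewrite lt_neqAle rx andbT.
by apply: contraTneq px => <-; rewrite /root lt_eqF.
Qed.

(* The block weights [(m x (x + 2), x (x^2 - 1), m (2 x^2 + x))] form an
   eigenvector of [D(K_1 ∨ (K_m ∪ K_1))] for [x] exactly when [x] is a root. *)
Definition charG (m : R) : {poly R} :=
  'X^3 - (m - 1)%:P * 'X^2 - (5 * m + 1)%:P * 'X - (3 * m + 1)%:P.

Lemma charGE m x :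
  (charG m).[x] = x ^+ 3 - (m - 1) * x ^+ 2 - (5 * m + 1) * x - (3 * m + 1).
Proof. by rewrite /charG !hornerE. Qed.

Lemma Gstar_lambda1_le (m : nat) r : (0 < m)%N -> 1 < r -> 0 <= (charG m%:R).[r] ->
  L (Kjoin 1 m 1) <= r.
Proof.
move=> m_gt0 r_gt1; rewrite charGE => hr.
have m_gt0' : 0 < m%:R :> R by rewrite ltr0n.
have r2_gt1 : 0 < r ^+ 2 - 1 by nra.
apply: (@Kjoin_lambda1_le _ _ _ _ _ _ (m%:R * r * (r + 2)) (r * (r ^+ 2 - 1))
                                       (m%:R * (2 * r ^+ 2 + r))) => //.
- by rewrite !mulr_gt0 //; lra.
- by rewrite mulr_gt0 //; lra.
- by rewrite mulr_gt0 //; nra.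
- lra.
- nra.
- by rewrite -subr_ge0; nra.
- nra.
Qed.

Lemma Gstar_root_le_lambda1 (m : nat) x : (0 < m)%N -> 1 < x -> root (charG m%:R) x ->
  x <= L (Kjoin 1 m 1).
Proof.
move=> m_gt0 x_gt1; rewrite /root charGE => /eqP hx.
have m_gt0' : 0 < m%:R :> R by rewrite ltr0n.
apply: (@Kjoin_eigenvalue_le_lambda1 _ _ _ _ _ _ (m%:R * x * (x + 2)) (x * (x ^+ 2 - 1))
                                                  (m%:R * (2 * x ^+ 2 + x))) => //.
- by ring.
- nra.
- by ring.
- by apply: Or31; rewrite !mulf_neq0 // gt_eqF //; lra.
Qed.

(* The block weights [((x - 2s + 2)(x + c + 1) - 2c (x + 2), s (x + 2), s (x + c + 1))]
   form an eigenvector of [D(K_s ∨ (K_c ∪ sK_1))] for [x] exactly when [x] is a root. *)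
Definition charH (s c : R) : {poly R} :=
  ('X - (s - 1)%:P) * (('X - (2 * s - 2)%:P) * ('X + (c + 1)%:P) - (2 * c)%:P * ('X + 2%:P))
  - (c * s)%:P * ('X + 2%:P) - (s ^+ 2)%:P * ('X + (c + 1)%:P).

Lemma charHE s c x : (charH s c).[x] =
  (x - (s - 1)) * ((x - (2 * s - 2)) * (x + (c + 1)) - 2 * c * (x + 2))
  - c * s * (x + 2) - s ^+ 2 * (x + (c + 1)).
Proof. by rewrite /charH !hornerE. Qed.

Lemma H_root_le_lambda1 (s c : nat) x : (0 < s)%N -> 0 <= x -> root (charH s%:R c%:R) x ->
  x <= L (Kjoin s c s).
Proof.
move=> s_gt0 x_ge0; rewrite /root charHE => /eqP hx.
have s_gt0' : 0 < s%:R :> R by rewrite ltr0n.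
have c_ge0 : 0 <= c%:R :> R by rewrite ler0n.
apply: (@Kjoin_eigenvalue_le_lambda1 _ _ _ _ _ _
  ((x - 2 * s%:R + 2) * (x + c%:R + 1) - 2 * c%:R * (x + 2))
  (s%:R * (x + 2)) (s%:R * (x + c%:R + 1))) => //.
- nra.
- by ring.
- by ring.
- by apply: Or33; split => //; rewrite mulf_neq0 // gt_eqF //; lra.
Qed.

(* The block weights [(e, _, x - a + 1)] form an eigenvector of [D(K_a ∨ eK_1)] for
   [x] exactly when [x] is a root; the middle block is empty, and its weight is only
   chosen to satisfy its row of the quotient equations. *)
Definition charS (a e : R) : {poly R} :=
  ('X - (a - 1)%:P) * ('X - (2 * e - 2)%:P) - (a * e)%:P.

Lemma charSE a e x : (charS a e).[x] = (x - (a - 1)) * (x - (2 * e - 2)) - a * e.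
Proof. by rewrite /charS !hornerE. Qed.

Lemma S_lambda1_le (a e : nat) r : (0 < a)%N -> (0 < e)%N -> a%:R - 1 < r ->
  0 <= (charS a%:R e%:R).[r] -> L (Kjoin a 0 e) <= r.
Proof.
move=> a_gt0 e_gt0 ar; rewrite charSE => hr.
have a_ge1 : 1 <= a%:R :> R by rewrite ler1n.
have e_gt0' : 0 < e%:R :> R by rewrite ltr0n.
pose w1 := (a%:R * e%:R + 2 * e%:R * (r - a%:R + 1)) / (r + 1).
have w1E : w1 * (r + 1) = a%:R * e%:R + 2 * e%:R * (r - a%:R + 1).
  by rewrite /w1 divfK // gt_eqF; lra.
apply: (@Kjoin_lambda1_le _ _ _ _ _ _ e%:R w1 (r - a%:R + 1)) => //.
- by rewrite divr_gt0 //; nra.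
- lra.
- lra.
- nra.
- nra.
- nra.
Qed.

Lemma S_root_le_lambda1 (a e : nat) x : (0 < a)%N -> (0 < e)%N -> -1 < x ->
  root (charS a%:R e%:R) x -> x <= L (Kjoin a 0 e).
Proof.
move=> a_gt0 e_gt0 x_gtN1; rewrite /root charSE => /eqP hx.
have e_gt0' : 0 < e%:R :> R by rewrite ltr0n.
apply: (@Kjoin_eigenvalue_le_lambda1 _ _ _ _ _ _ e%:R
          ((a%:R * e%:R + 2 * e%:R * (x - a%:R + 1)) / (x + 1)) (x - a%:R + 1)) => //.
- by ring.
- by field; rewrite gt_eqF //; lra.
- nra.
- by apply: Or31; rewrite gt_eqF.
Qed.

End Families.

Section Comparisons.
Variable R : realType.
Local Notation L g := (lambda1 (distmx R g)).

Lemma Gstar_lt_H (m s c : nat) (r U : R) : (0 < m)%N -> (0 < s)%N -> 1 < r -> r <= U ->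
  0 <= (charG m%:R).[r] -> (charH s%:R c%:R).[r] < 0 -> 0 <= (charH s%:R c%:R).[U] ->
  L (Kjoin 1 m 1) < L (Kjoin s c s).
Proof.
move=> m_gt0 s_gt0 r_gt1 rU hG hHr hHU.
have [x rx Hx] := root_gt_of_sign_change rU hHr hHU.
apply: le_lt_trans (Gstar_lambda1_le m_gt0 r_gt1 hG) _.
have x_ge0 : 0 <= x by apply: le_trans (ltW rx); lra.
exact: lt_le_trans rx (H_root_le_lambda1 s_gt0 x_ge0 Hx).
Qed.

Lemma Gstar_lt_S (m a e : nat) (r U : R) : (0 < m)%N -> (0 < a)%N -> (0 < e)%N ->
  1 < r -> r <= U ->
  0 <= (charG m%:R).[r] -> (charS a%:R e%:R).[r] < 0 -> 0 <= (charS a%:R e%:R).[U] ->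
  L (Kjoin 1 m 1) < L (Kjoin a 0 e).
Proof.
move=> m_gt0 a_gt0 e_gt0 r_gt1 rU hG hSr hSU.
have [x rx Sx] := root_gt_of_sign_change rU hSr hSU.
apply: le_lt_trans (Gstar_lambda1_le m_gt0 r_gt1 hG) _.
have x_gtN1 : -1 < x by apply: lt_trans rx; lra.
exact: lt_le_trans rx (S_root_le_lambda1 a_gt0 e_gt0 x_gtN1 Sx).
Qed.

Lemma S_lt_Gstar (a e m : nat) (r U : R) : (0 < m)%N -> (0 < a)%N -> (0 < e)%N ->
  1 < r -> a%:R - 1 < r -> r <= U ->
  0 <= (charS a%:R e%:R).[r] -> (charG m%:R).[r] < 0 -> 0 <= (charG m%:R).[U] ->
  L (Kjoin a 0 e) < L (Kjoin 1 m 1).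
Proof.
move=> m_gt0 a_gt0 e_gt0 r_gt1 ar rU hS hGr hGU.
have [x rx Gx] := root_gt_of_sign_change rU hGr hGU.
apply: le_lt_trans (S_lambda1_le a_gt0 e_gt0 ar hS) _.
exact: lt_le_trans rx (Gstar_root_le_lambda1 m_gt0 (lt_trans r_gt1 rx) Gx).
Qed.

(* Substituting [s = p + 2] and [n = 2 p + q + 6] makes all coefficients nonnegative. *)
Lemma charH_sign_change (s n : R) : 2 <= s -> 2 * s + 2 <= n -> 10 <= n ->
  (charH s (n - 2 * s)).[n + 2] < 0 /\ 0 <= (charH s (n - 2 * s)).[2 * n].
Proof.
move=> s_ge2 hn n_ge10; rewrite !charHE.
have p_ge0 : 0 <= s - 2 by lra.
have q_ge0 : 0 <= n - 2 * s - 2 by lra.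
have := mulr_ge0 p_ge0 q_ge0; have := mulr_ge0 p_ge0 (exprn_ge0 2 q_ge0).
have := mulr_ge0 (exprn_ge0 2 p_ge0) q_ge0; have := exprn_ge0 3 p_ge0.
have := exprn_ge0 3 q_ge0; have := exprn_ge0 2 p_ge0; have := exprn_ge0 2 q_ge0.
by move=> *; split; nra.
Qed.

Lemma Gstar_lt_Hsn (s n : nat) : (2 <= s)%N -> (2 * s + 2 <= n)%N ->
  L (Kjoin 1 (n - 2) 1) < L (Kjoin s (n - 2 * s) s).
Proof.
move=> s_ge2 hn; have [n_ge10|n_lt10] := leqP 10 n.
  have n_ge10' : 10 <= n%:R :> R by rewrite ler_nat.
  have s_ge2' : 2 <= s%:R :> R by rewrite ler_nat.
  have hn' : 2 * s%:R + 2 <= n%:R :> R by rewrite -(ler_nat R) natrD natrM in hn.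
  apply: (@Gstar_lt_H _ _ _ (n%:R + 2) (2 * n%:R)); try lia.
  - lra.
  - lra.
  - by rewrite natrB ?charGE; [nra | lia].
  - have [Hr HU] := charH_sign_change s_ge2' hn' n_ge10'.
    by rewrite natrB ?natrM; last lia.
  - have [Hr HU] := charH_sign_change s_ge2' hn' n_ge10'.
    by rewrite natrB ?natrM; last lia.
have s23 : s = 2%N \/ s = 3%N by lia.
case: s23 hn => -> hn.
- have [->|[->|[->|->]]] : n = 6%N \/ n = 7%N \/ n = 8%N \/ n = 9%N by lia.
  + by apply: (@Gstar_lt_H 4 2 2 (27/4) 12); rewrite ?charGE ?charHE //; lra.
  + by apply: (@Gstar_lt_H 5 2 3 8 14); rewrite ?charGE ?charHE //; lra.
  + by apply: (@Gstar_lt_H 6 2 4 9 16); rewrite ?charGE ?charHE //; lra.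
  + by apply: (@Gstar_lt_H 7 2 5 10 18); rewrite ?charGE ?charHE //; lra.
- have [->|->] : n = 8%N \/ n = 9%N by lia.
  + by apply: (@Gstar_lt_H 6 3 2 9 16); rewrite ?charGE ?charHE //; lra.
  + by apply: (@Gstar_lt_H 7 3 3 10 18); rewrite ?charGE ?charHE //; lra.
Qed.

Lemma Gstar_lt_S_odd (s n : nat) : (2 <= s)%N -> n = (2 * s + 1)%N ->
  L (Kjoin 1 (n - 2) 1) < L (Kjoin s 0 (n - s)).
Proof.
move=> s_ge2 ->; have [s_ge5|s_lt5] := leqP 5 s.
  have s_ge5' : 5 <= s%:R :> R by rewrite ler_nat.
  have mE : (2 * s + 1 - 2)%:R = 2 * s%:R - 1 :> R.
    by rewrite natrB ?natrD ?natrM; [ring | lia].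
  have eE : (2 * s + 1 - s)%:R = s%:R + 1 :> R.
    by rewrite natrB ?natrD ?natrM; [ring | lia].
  apply: (@Gstar_lt_S _ _ _ (2 * s%:R + 3) (4 * s%:R + 2));
    rewrite ?mE ?eE ?charGE ?charSE; try lia; nra.
have [->|[->|->]] : s = 2%N \/ s = 3%N \/ s = 4%N by lia.
- by apply: (@Gstar_lt_S 3 2 3 (134/25) 10); rewrite ?charGE ?charSE //; lra.
- by apply: (@Gstar_lt_S 5 3 4 (39/5) 14); rewrite ?charGE ?charSE //; lra.
- by apply: (@Gstar_lt_S 7 4 5 10 18); rewrite ?charGE ?charSE //; lra.
Qed.

Lemma Gstar_lt_S_even (s n : nat) : (5 <= s)%N -> n = (2 * s)%N ->
  L (Kjoin 1 (n - 2) 1) < L (Kjoin s 0 (n - s)).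
Proof.
move=> s_ge5 ->; have [s_ge7|s_lt7] := leqP 7 s.
  have s_ge7' : 7 <= s%:R :> R by rewrite ler_nat.
  have mE : (2 * s - 2)%:R = 2 * s%:R - 2 :> R.
    by rewrite natrB ?natrM; [ring | lia].
  have eE : (2 * s - s)%:R = s%:R :> R.
    by rewrite natrB ?natrM; [ring | lia].
  apply: (@Gstar_lt_S _ _ _ (2 * s%:R + 2) (4 * s%:R));
    rewrite ?mE ?eE ?charGE ?charSE; try lia; nra.
have [->|->] : s = 5%N \/ s = 6%N by lia.
- by apply: (@Gstar_lt_S 8 5 5 (56/5) 20); rewrite ?charGE ?charSE //; lra.
- by apply: (@Gstar_lt_S 10 6 6 (27/2) 24); rewrite ?charGE ?charSE //; lra.
Qed.

Lemma S_lt_Gstar_even (s n : nat) : (2 <= s <= 4)%N -> n = (2 * s)%N ->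
  L (Kjoin s 0 (n - s)) < L (Kjoin 1 (n - 2) 1).
Proof.
move=> hs ->.
have [->|[->|->]] : s = 2%N \/ s = 3%N \/ s = 4%N by lia.
- by apply: (@S_lt_Gstar 2 2 2 4 8); rewrite ?charGE ?charSE //; lra.
- by apply: (@S_lt_Gstar 3 3 4 (63/10) 12); rewrite ?charGE ?charSE //; lra.
- by apply: (@S_lt_Gstar 4 4 6 (351/40) 16); rewrite ?charGE ?charSE //; lra.
Qed.

End Comparisons.

Lemma distmx_Gstar (R : pzRingType) n : distmx R (Gstar n) = distmx R (Kjoin 1 (n - 2) 1).
Proof.
apply: distmx_ext => i j; rewrite /Gstar /Kjoin /gjoin /gunion.
case: (split i) => x; case: (split j) => y //.
case: (split x) => x'; case: (split y) => y' //.
by rewrite /complete /edgeless (ord1 x') (ord1 y') eqxx.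
Qed.

Lemma distmx_Snk (R : pzRingType) n k : distmx R (Snk n k) = distmx R (Kjoin k 0 (n - k)).
Proof.
apply: distmx_ext => i j; rewrite /Snk /Kjoin /gjoin /gunion.
case: (split i) => x; case: (split j) => y //.
by case: (@split 0 _ x) => [[]|x'] //; case: (@split 0 _ y) => [[]|y'].
Qed.

Lemma Gstar3_Snk31 : Gstar 3 =2 Snk 3 1.
Proof.
move=> i j; rewrite /Gstar /Snk /gjoin /gunion.
case: (split_ordP i) => [x Ei|x Ei]; case: (split_ordP j) => [y Ej|y Ej];
  rewrite ?Ei ?Ej ?(unsplitK (inl _)) ?(unsplitK (inr _)) //.
case: (split_ordP x) => [x' Ex|x' Ex]; case: (split_ordP y) => [y' Ey|y' Ey];
  rewrite ?Ex ?Ey ?(unsplitK (inl _)) ?(unsplitK (inr _)) //.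
all: by rewrite /complete /edgeless (ord1 x') (ord1 y') eqxx.
Qed.

Lemma le_eq_iff_of_lt d (T : porderType d) (x y : T) (P : Prop) :
  (x < y)%O -> ~ P -> (x <= y)%O /\ (x = y <-> P).
Proof.
move=> xy nP; split; first exact: ltW.
by split=> [exy|/nP //]; move: xy; rewrite exy ltxx.
Qed.

Lemma le_eq_iff_of_eq d (T : porderType d) (x y : T) (P : Prop) :
  x = y -> P -> (x <= y)%O /\ (x = y <-> P).
Proof. by move=> -> p. Qed.

Theorem lemma2p8 (R : realType) (s n : nat) (hs : (1 <= s)%N) (hn : (2 * s <= n)%N) :
  let l := fun N (g : graph N) => lambda1 (distmx R g) in
  ((2 * s + 2 <= n)%N ->
     l _ (Gstar n) <= l _ (Hsn s n) /\ (l _ (Gstar n) = l _ (Hsn s n) <-> s = 1%N)) /\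
  (n = (2 * s + 1)%N ->
     l _ (Gstar n) <= l _ (Snk n (n.-1)./2) /\
     (l _ (Gstar n) = l _ (Snk n (n.-1)./2) <-> n = 3%N)) /\
  (n = (2 * s)%N -> (10 <= n)%N -> l _ (Gstar n) < l _ (Snk n n./2)) /\
  (n = (2 * s)%N -> (2 <= n <= 8)%N ->
     l _ (Snk n n./2) <= l _ (Gstar n) /\ (l _ (Snk n n./2) = l _ (Gstar n) <-> n = 2%N)).
Proof.
move=> l; rewrite {}/l /=.
have half_odd : ((2 * s + 1).-1)./2 = s by rewrite addn1 /= mul2n doubleK.
have half_even : (2 * s)./2 = s by rewrite mul2n doubleK.
have [s1|s_ge2] : s = 1%N \/ (2 <= s)%N by lia.
  subst s; split; [|split; [|split]] => [_|->|->|->].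
  - by rewrite distmx_Gstar; apply: le_eq_iff_of_eq.
  - by rewrite half_odd (distmx_ext _ Gstar3_Snk31); apply: le_eq_iff_of_eq.
  - by [].
  - by move=> _; rewrite half_even distmx_Gstar distmx_Snk; apply: le_eq_iff_of_eq.
rewrite !distmx_Snk distmx_Gstar.
have s_neq1 : s <> 1%N by lia.
split; [|split; [|split]].
- by move=> hn2; apply: le_eq_iff_of_lt (Gstar_lt_Hsn _ s_ge2 hn2) s_neq1.
- move=> n_odd; rewrite n_odd half_odd -n_odd.
  by apply: le_eq_iff_of_lt (Gstar_lt_S_odd _ s_ge2 n_odd) _; lia.
- move=> n_even n_ge10; rewrite n_even half_even -n_even.
  by apply: (Gstar_lt_S_even _ _ n_even); lia.
- move=> n_even /andP[_ n_le8]; rewrite n_even half_even -n_even.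
  by apply: le_eq_iff_of_lt (S_lt_Gstar_even _ _ n_even) _; lia.
Qed.
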